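(* Let $G_0,G_1\in\mathbb{Z}$ with $\gcd(G_0,G_1)=1$, let $(G_n)_{n\ge0}$ satisfy $G_n=G_{n-1}+G_{n-2}$ for $n\ge2$, and let $\mu = G_1^2 - G_0 G_1 - G_0^2$. For every even integer $k \geq 1$ (i.e. $k\ge 2$ even), $$\mathcal{G}^2_{G_0,G_1}(k) = \begin{cases} F_k, & \text{if $5$ does not divide $\mu$},\\ 5 F_k, & \text{if $5$ divides $\mu$},\end{cases}$$ where $F_k$ is the $k$-th Fibonacci number.
   Context: $\mathcal{G}^2_{G_0,G_1}(k)=\gcd\{\sum_{i=1}^k G_{n+i}^2 : n\ge 0\}$ (nonnegative gcd of this infinite set). $F_0=0$, $F_1=1$, $F_n=F_{n-1}+F_{n-2}$. *)

From Stdlib Require Import ZArith.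
Open Scope Z_scope.

Fixpoint fib_aux (n : nat) : Z * Z :=
  match n with
  | O => (0, 1)
  | S m => let (a, b) := fib_aux m in (b, a + b)
  end.
Definition F (n : nat) : Z := fst (fib_aux n).

Definition is_gcd_of_set (S : Z -> Prop) (d : Z) : Prop :=
  0 <= d /\ (forall x, S x -> (d | x)) /\
  (forall e, (forall x, S x -> (e | x)) -> (e | d)).

Fixpoint sum_sq (G : nat -> Z) (n k : nat) : Z :=
  match k with
  | O => 0
  | S k' => sum_sq G n k' + (G (n + k)%nat) ^ 2
  end.

Definition sq_sum_set (G : nat -> Z) (k : nat) : Z -> Prop :=
  fun x => exists n : nat, x = sum_sq G n k.

(** Write [P m = G_m^2 + G_(m+1)^2].  Telescoping, the addition formula
    [G_(n+i+1) = F_i G_n + F_(i+1) G_(n+1)] and Cassini's identity for [F_(2j)]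
    give [sum_(i=1..2j) G_(n+i)^2 = F_(2j) P(n+j)], so the gcd is [F_k] times the
    gcd of the [P m].  For coprime [x], [y] the ideal generated by [x^2 + y^2] and
    [y^2 + (y+x)^2] contains [5x^3] and [5y^3], so a common divisor of two
    consecutive [P m] divides [5]; it then also divides [mu], because
    [mu_m = G_(m+1)^2 - G_m G_(m+1) - G_m^2 = +-mu] equals
    [-3 P m + 2 P (m+1) - 5 G_m G_(m+1)].  Conversely [gcd(5, mu)] divides every
    [P m]: modulo [5], [mu_m] is the square [(G_(m+1) + 2 G_m)^2] and [P m] is a
    multiple of [G_(m+1) + 2 G_m]. *)

From Stdlib Require Import ZArith Znumtheory Lia.
Open Scope Z_scope.

Lemma prime_5 : prime 5.
Proof.
  apply prime_intro; [lia|]. intros n hn. apply Zgcd_1_rel_prime.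
  assert (n = 1 \/ n = 2 \/ n = 3 \/ n = 4) as [-> | [-> | [-> | ->]]] by lia;
    reflexivity.
Qed.

Lemma gcd_5_l z : Z.gcd 5 z = if z mod 5 =? 0 then 5 else 1.
Proof.
  destruct (Z.eqb_spec (z mod 5) 0) as [h | h].
  - apply Z.divide_gcd_iff; [lia|]. now apply Z.mod_divide.
  - apply Zgcd_1_rel_prime, prime_rel_prime; [exact prime_5|].
    intros d. apply h, Z.mod_divide; [lia | exact d].
Qed.

Lemma divide_mul_gcd e c a b :
  (e | c * a) -> (e | c * b) -> (e | c * Z.gcd a b).
Proof.
  intros ha hb. destruct (Z.gcd_bezout a b _ eq_refl) as [u [v huv]].
  rewrite <- huv. replace (c * (u * a + v * b)) with (u * (c * a) + v * (c * b)) by ring.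
  apply Z.divide_add_r; apply Z.divide_mul_r; assumption.
Qed.

Lemma rel_prime_cube_r a b : rel_prime a b -> rel_prime a (b ^ 3).
Proof.
  intros h. replace (b ^ 3) with (b * (b * b)) by ring.
  apply rel_prime_mult; [|apply rel_prime_mult]; exact h.
Qed.

Lemma gcd_sum_sq_succ_divide_5 x y :
  Z.gcd x y = 1 -> (Z.gcd (x ^ 2 + y ^ 2) (y ^ 2 + (y + x) ^ 2) | 5).
Proof.
  intros hxy.
  set (P := x ^ 2 + y ^ 2). set (Q := y ^ 2 + (y + x) ^ 2).
  assert (cubes : Z.gcd (x ^ 3) (y ^ 3) = 1).
  { apply Zgcd_1_rel_prime in hxy. apply Zgcd_1_rel_prime.
    apply rel_prime_cube_r, rel_prime_sym, rel_prime_cube_r, rel_prime_sym, hxy. }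
  assert (hx : (Z.gcd P Q | 5 * x ^ 3)).
  { replace (5 * x ^ 3) with ((6 * x + 4 * y) * P - (x + 2 * y) * Q) by (unfold P, Q; ring).
    apply Z.divide_sub_r; apply Z.divide_mul_r;
      [apply Z.gcd_divide_l | apply Z.gcd_divide_r]. }
  assert (hy : (Z.gcd P Q | 5 * y ^ 3)).
  { replace (5 * y ^ 3) with ((2 * x + 3 * y) * P + (y - 2 * x) * Q) by (unfold P, Q; ring).
    apply Z.divide_add_r; apply Z.divide_mul_r;
      [apply Z.gcd_divide_l | apply Z.gcd_divide_r]. }
  pose proof (divide_mul_gcd _ _ _ _ hx hy) as h. now rewrite cubes, Z.mul_1_r in h.
Qed.

Lemma five_divides_sum_sq x y : (5 | y ^ 2 - x * y - x ^ 2) -> (5 | x ^ 2 + y ^ 2).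
Proof.
  intros h.
  assert (sq : (5 | (y + 2 * x) * (y + 2 * x))).
  { replace ((y + 2 * x) * (y + 2 * x)) with ((y ^ 2 - x * y - x ^ 2) + 5 * (x * y + x ^ 2))
      by ring.
    apply Z.divide_add_r; [exact h | apply Z.divide_factor_l]. }
  assert (lin : (5 | y + 2 * x)) by now destruct (prime_mult 5 prime_5 _ _ sq).
  replace (x ^ 2 + y ^ 2) with ((y - 2 * x) * (y + 2 * x) + 5 * x ^ 2) by ring.
  apply Z.divide_add_r; [apply Z.divide_mul_r, lin | apply Z.divide_factor_l].
Qed.

Lemma F_succ_succ n : F (S (S n)) = F (S n) + F n.
Proof. unfold F; simpl. destruct (fib_aux n); simpl. ring. Qed.

Lemma F_nonneg n : 0 <= F n.
Proof.
  enough (h : 0 <= F n /\ 0 <= F (S n)) by apply h.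
  induction n as [|n [h0 h1]]; [split; discriminate|].
  split; [exact h1|]. rewrite F_succ_succ. lia.
Qed.

Section FibonacciLike.

Variable G : nat -> Z.
Hypothesis G_succ_succ : forall n, G (S (S n)) = G (S n) + G n.

Lemma fib_like_add n i : G (n + i)%nat = (F (S i) - F i) * G n + F i * G (S n).
Proof.
  enough (h : G (n + i)%nat = (F (S i) - F i) * G n + F i * G (S n) /\
              G (n + S i)%nat = (F (S (S i)) - F (S i)) * G n + F (S i) * G (S n))
    by apply h.
  induction i as [|i [hi hSi]].
  - rewrite Nat.add_0_r, Nat.add_1_r.
    change (F 0) with 0; change (F 1) with 1; change (F 2) with 1. split; ring.
  - split; [exact hSi|].
    replace (n + S (S i))%nat with (S (S (n + i))) by lia.
    rewrite G_succ_succ, <- Nat.add_succ_r, hi, hSi, !F_succ_succ. ring.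
Qed.

Lemma fib_like_add_succ n i : G (S (n + i)) = F i * G n + F (S i) * G (S n).
Proof. rewrite <- Nat.add_succ_r, fib_like_add, F_succ_succ. ring. Qed.

Lemma sum_sq_telescope n k :
  sum_sq G n k = G (n + k)%nat * G (S (n + k)) - G n * G (S n).
Proof.
  induction k as [|k IH]; cbn [sum_sq].
  - rewrite Nat.add_0_r. ring.
  - rewrite IH, <- Nat.add_succ_r, Nat.add_succ_r, G_succ_succ. ring.
Qed.

Lemma gcd_fib_like i : Z.gcd (G i) (G (S i)) = Z.gcd (G 0) (G 1).
Proof.
  induction i as [|i IH]; [reflexivity|].
  rewrite G_succ_succ, Z.add_comm, Z.gcd_add_diag_r, Z.gcd_comm. exact IH.
Qed.

Definition cassini i := G (S i) ^ 2 - G i * G (S i) - G i ^ 2.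

Lemma cassini_succ i : cassini (S i) = - cassini i.
Proof. unfold cassini. rewrite G_succ_succ. ring. Qed.

Lemma cassini_even j : cassini (2 * j) = cassini 0.
Proof.
  induction j as [|j IH]; [reflexivity|].
  replace (2 * S j)%nat with (S (S (2 * j))) by lia. rewrite !cassini_succ. lia.
Qed.

Lemma cassini_pm i : cassini i = cassini 0 \/ cassini i = - cassini 0.
Proof. induction i as [|i IH]; [now left|]. rewrite cassini_succ. lia. Qed.

Definition pair_sq i := G i ^ 2 + G (S i) ^ 2.

Lemma cassini_pair_sq i :
  cassini i = -3 * pair_sq i + 2 * pair_sq (S i) - G i * G (S i) * 5.
Proof. unfold cassini, pair_sq. rewrite G_succ_succ. ring. Qed.

Lemma gcd_5_cassini_divide_pair_sq i : (Z.gcd 5 (cassini 0) | pair_sq i).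
Proof.
  destruct (Zdivide_dec 5 (cassini 0)) as [h5 | h5].
  - apply (Z.divide_trans _ 5); [apply Z.gcd_divide_l|].
    apply five_divides_sum_sq.
    destruct (cassini_pm i) as [h | h]; unfold cassini in h; rewrite h;
      [|apply Z.divide_opp_r]; exact h5.
  - rewrite (proj2 (Zgcd_1_rel_prime _ _) (prime_rel_prime 5 prime_5 _ h5)).
    apply Z.divide_1_l.
Qed.

Lemma common_divisor_pair_sq e c i :
  Z.gcd (G 0) (G 1) = 1 -> (e | c * pair_sq i) -> (e | c * pair_sq (S i)) ->
  (e | c * Z.gcd 5 (cassini 0)).
Proof.
  intros hcop hP hPS.
  assert (h5 : (e | c * 5)).
  { apply (Z.divide_trans _ (c * Z.gcd (pair_sq i) (pair_sq (S i)))).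
    - now apply divide_mul_gcd.
    - apply Z.mul_divide_mono_l. unfold pair_sq. rewrite G_succ_succ.
      apply gcd_sum_sq_succ_divide_5. now rewrite gcd_fib_like. }
  assert (hi : (e | c * cassini i)).
  { rewrite cassini_pair_sq.
    replace (c * (-3 * pair_sq i + 2 * pair_sq (S i) - G i * G (S i) * 5))
      with (-3 * (c * pair_sq i) + 2 * (c * pair_sq (S i)) - G i * G (S i) * (c * 5))
      by ring.
    apply Z.divide_sub_r; [apply Z.divide_add_r|]; apply Z.divide_mul_r; assumption. }
  apply divide_mul_gcd; [exact h5|].
  destruct (cassini_pm i) as [h | h]; rewrite h in hi; [exact hi|].
  rewrite Z.mul_opp_r in hi. now apply Z.divide_opp_r.
Qed.

End FibonacciLike.

Lemma F_double j : F (2 * j) = F j * (2 * F (S j) - F j).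
Proof.
  replace (2 * j)%nat with (j + j)%nat by lia.
  rewrite (fib_like_add F F_succ_succ). ring.
Qed.

Lemma F_double_succ j : F (S (2 * j)) = F j ^ 2 + F (S j) ^ 2.
Proof.
  replace (2 * j)%nat with (j + j)%nat by lia.
  rewrite (fib_like_add_succ F F_succ_succ). ring.
Qed.

Lemma sum_sq_even G (G_succ_succ : forall n, G (S (S n)) = G (S n) + G n) n j :
  sum_sq G n (2 * j) = F (2 * j) * pair_sq G (n + j).
Proof.
  pose proof (cassini_even F F_succ_succ j) as cas.
  change (cassini F 0) with 1 in cas. unfold cassini in cas.
  assert (mid : pair_sq G (n + j) =
    (F (S (2 * j)) - F (2 * j)) * G n ^ 2 + 2 * F (2 * j) * G n * G (S n)
    + F (S (2 * j)) * G (S n) ^ 2).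
  { unfold pair_sq. rewrite (fib_like_add G G_succ_succ), (fib_like_add_succ G G_succ_succ).
    rewrite F_double, F_double_succ. ring. }
  rewrite mid, (sum_sq_telescope G G_succ_succ), (fib_like_add G G_succ_succ),
    (fib_like_add_succ G G_succ_succ).
  set (A := F (2 * j)) in *. set (B := F (S (2 * j))) in *.
  transitivity (A * ((B - A) * G n ^ 2 + 2 * A * G n * G (S n) + B * G (S n) ^ 2)
                + G n * G (S n) * ((B ^ 2 - A * B - A ^ 2) - 1)); [ring|].
  rewrite cas. ring.
Qed.

Theorem theorem4p7 (G : nat -> Z)
  (hcop : Z.gcd (G 0%nat) (G 1%nat) = 1)
  (hrec : forall n : nat, (2 <= n)%nat -> G n = G (n - 1)%nat + G (n - 2)%nat)
  (k : nat) (hk : (1 <= k)%nat) (hev : Nat.Even k) :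
  let mu := G 1%nat ^ 2 - G 0%nat * G 1%nat - G 0%nat ^ 2 in
  is_gcd_of_set (sq_sum_set G k)
    (if (mu mod 5 =? 0) then 5 * F k else F k).
Proof.
  intro mu.
  assert (G_succ_succ : forall n, G (S (S n)) = G (S n) + G n).
  { intro n. rewrite (hrec (S (S n))) by lia. f_equal; f_equal; lia. }
  destruct hev as [j ->].
  replace (if mu mod 5 =? 0 then 5 * F (2 * j) else F (2 * j))
    with (F (2 * j) * Z.gcd 5 (cassini G 0))
    by (change (cassini G 0) with mu; rewrite gcd_5_l; destruct (mu mod 5 =? 0); ring).
  split; [|split].
  - apply Z.mul_nonneg_nonneg; [apply F_nonneg | apply Z.gcd_nonneg].
  - intros x [n ->]. rewrite (sum_sq_even G G_succ_succ).
    apply Z.mul_divide_mono_l, (gcd_5_cassini_divide_pair_sq G G_succ_succ).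
  - intros e he. apply (common_divisor_pair_sq G G_succ_succ e _ j hcop); apply he;
      [exists 0%nat | exists 1%nat]; symmetry; exact (sum_sq_even G G_succ_succ _ j).
Qed.
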